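(* Let $G$ be a commutative group, $H$ its torsion subgroup, $G'=G/H$, $\varphi:G\to G'$ the natural homomorphism, $U\subset G$ finite and $U'=\varphi(U)$. Let $\vartheta$ be any of the functionals $\alpha,\alpha',\alpha'',\beta,\beta',\beta''$, with $\vartheta(U)$ computed in $G$ and $\vartheta(U')$ in $G'$. Then $\vartheta(U')\ge\vartheta(U)$.
   Context: For a finite set $U$ in a commutative group $K$, with $A,B$ ranging over nonempty finite subsets of $K$: $\alpha(U)=\inf_{A\supset U,B\supset U}\frac{|A+B|}{\sqrt{|A||B|}}$; $\alpha'(U)=\inf_{A\supset U,B\supset U,|A|=|B|}\frac{|A+B|}{|A|}$; $\alpha''(U)=\inf_{A\supset U}\frac{|A+A|}{|A|}$; $\beta(U)=\inf_{A,B}\frac{|A+B+U|}{\sqrt{|A||B|}}$; $\beta'(U)=\inf_{A,B,|A|=|B|}\frac{|A+B+U|}{\sqrt{|A||B|}}$; $\beta''(U)=\inf_A\frac{|A+A+U|}{|A|}$. *)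

From HB Require Import structures.
From mathcomp Require Import all_boot all_order all_algebra.
From mathcomp Require Import finmap.
From mathcomp Require Import boolp classical_sets reals.

Set Implicit Arguments.
Unset Strict Implicit.
Unset Printing Implicit Defensive.

Import Order.TTheory GRing.Theory Num.Theory.
Local Open Scope ring_scope.
Local Open Scope fset_scope.

Definition sumset (K : zmodType) (A B : {fset K}) : {fset K} :=
  [fset (a + b)%R | a in A, b in B].

Definition fimage (K K' : zmodType) (f : K -> K') (U : {fset K}) : {fset K'} :=
  [fset f u | u in U].

Definition torsion (K : zmodType) (x : K) : Prop :=
  exists n : nat, (0 < n)%N /\ x *+ n = 0.

Section Functionals.
Variables (R : realType) (K : zmodType).

Definition alpha (U : {fset K}) : R :=
  inf [set r : R | exists A B : {fset K},
        [/\ A != fset0, B != fset0, fsubset U A, fsubset U B &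
            r = (#|` sumset A B|)%:R / Num.sqrt ((#|` A|)%:R * (#|` B|)%:R)]].

Definition alpha' (U : {fset K}) : R :=
  inf [set r : R | exists A B : {fset K},
        [/\ A != fset0, B != fset0, fsubset U A /\ fsubset U B,
            #|` A| = #|` B| &
            r = (#|` sumset A B|)%:R / (#|` A|)%:R]].

Definition alpha'' (U : {fset K}) : R :=
  inf [set r : R | exists A : {fset K},
        [/\ A != fset0, fsubset U A &
            r = (#|` sumset A A|)%:R / (#|` A|)%:R]].

Definition beta (U : {fset K}) : R :=
  inf [set r : R | exists A B : {fset K},
        [/\ A != fset0, B != fset0 &
            r = (#|` sumset (sumset A B) U|)%:R
                / Num.sqrt ((#|` A|)%:R * (#|` B|)%:R)]].

Definition beta' (U : {fset K}) : R :=
  inf [set r : R | exists A B : {fset K},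
        [/\ A != fset0, B != fset0, #|` A| = #|` B| &
            r = (#|` sumset (sumset A B) U|)%:R
                / Num.sqrt ((#|` A|)%:R * (#|` B|)%:R)]].

Definition beta'' (U : {fset K}) : R :=
  inf [set r : R | exists A : {fset K},
        A != fset0 /\ r = (#|` sumset (sumset A A) U|)%:R / (#|` A|)%:R].

End Functionals.

From HB Require Import structures.
From mathcomp Require Import all_boot all_order all_algebra.
From mathcomp Require Import finmap.
From mathcomp Require Import boolp classical_sets reals.

(* Given A', B' in G', pick a set-theoretic section s of phi.  The defects
   s x + s y - s (x + y) and u - s (phi u), for the finitely many relevant
   x, y in G' and u in U, are torsion, hence lie in a finite additively closed
   set T of torsion elements.  The lifts A = s(A') + T and B = s(B') + T have
   |A| = |A'||T| and |B| = |B'||T|, while A + B and A + B + U are contained in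
   the lifts of A' + B' and A' + B' + U', of sizes |A' + B'||T| and
   |A' + B' + U'||T|.  So each ratio in the definition of the functionals at U'
   dominates a ratio at U, and U' <= A' implies U <= A. *)

Set Implicit Arguments.
Unset Strict Implicit.
Unset Printing Implicit Defensive.

Import Order.TTheory GRing.Theory Num.Theory.
Local Open Scope fset_scope.
Local Open Scope ring_scope.

Section Sumset.
Variable K : zmodType.
Implicit Types A B C D : {fset K}.

Lemma sumsetP A B x :
  reflect (exists a b, [/\ a \in A, b \in B & x = a + b]) (x \in sumset A B).
Proof.
apply: (iffP (imfset2P _ _ _ _ _)) => [[a Aa [b Bb ->]]|[a [b [Aa Bb ->]]]].
  by exists a, b.
by exists a => //; exists b.
Qed.

Lemma mem_sumset A B a b : a \in A -> b \in B -> a + b \in sumset A B.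
Proof. by move=> Aa Bb; apply/sumsetP; exists a, b. Qed.

Lemma sumsetS A B C D :
  fsubset A C -> fsubset B D -> fsubset (sumset A B) (sumset C D).
Proof.
move=> /fsubsetP AC /fsubsetP BD; apply/fsubsetP => _ /sumsetP [a [b [Aa Bb ->]]].
by rewrite mem_sumset ?AC ?BD.
Qed.

Lemma card_sumset_inj A B :
  {in A & B, forall a b, {in A & B, forall a' b',
     a + b = a' + b' -> a = a' /\ b = b'}} ->
  #|` sumset A B| = (#|` A| * #|` B|)%N.
Proof.
move=> ABinj; rewrite /sumset unlock /= size_seq_fset undup_id.
  by rewrite size_allpairs.
apply: allpairs_uniq; rewrite ?fset_uniq //.
move=> [a b] [a' b'] /allpairsP [[x y] /= [Ax By [-> ->]]].
move=> /allpairsP [[x' y'] /= [Ax' By' [-> ->]]] /= E.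
by have [-> ->] := ABinj _ _ Ax By _ _ Ax' By' E.
Qed.

End Sumset.

Section Torsion.
Variable G : zmodType.

Lemma torsionD (a b : G) : torsion a -> torsion b -> torsion (a + b).
Proof.
move=> [m [m_gt0 ma]] [n [n_gt0 nb]]; exists (m * n)%N; split.
  by rewrite muln_gt0 m_gt0.
by rewrite mulrnDl mulrnA ma mul0rn add0r mulnC mulrnA nb mul0rn.
Qed.

Lemma torsionMn (x : G) j : torsion x -> torsion (x *+ j).
Proof. by move=> [n [n_gt0 nx]]; exists n; rewrite -mulrnA mulnC mulrnA nx mul0rn. Qed.

Lemma mulrn_modn (x : G) n k : x *+ n = 0 -> x *+ k = x *+ (k %% n).
Proof. by move=> nx; rewrite {1}(divn_eq k n) mulrnDr mulnC mulrnA nx mul0rn add0r. Qed.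

Lemma torsion_hull (s : seq G) : {in s, forall x, torsion x} ->
  exists T : {fset G}, [/\ 0 \in T, {in T &, forall a b, a + b \in T},
    {subset s <= T} & {in T, forall t, torsion t}].
Proof.
elim: s => [_|x s IHs tor_xs].
  exists [fset 0]; split=> [||//|t].
  - exact: fset11.
  - by move=> a b /fset1P -> /fset1P ->; rewrite addr0 fset11.
  - by move=> /fset1P ->; exists 1%N.
have [T [T0 TD sT torT]] : exists T : {fset G}, [/\ 0 \in T,
    {in T &, forall a b, a + b \in T}, {subset s <= T} & {in T, forall t, torsion t}].
  by apply: IHs => y sy; apply: tor_xs; rewrite inE sy orbT.
have tor_x : torsion x by apply: tor_xs; rewrite inE eqxx.
have [n [n_gt0 nx]] := tor_x.
pose M := [fset x *+ j | j in iota 0 n].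
have M_mulrn k : x *+ k \in M.
  rewrite (mulrn_modn k nx); apply/imfsetP; exists (k %% n)%N => //=.
  by rewrite mem_iota ltn_pmod.
exists (sumset T M); split.
- by rewrite -[0]addr0 mem_sumset // -(mulr0n x).
- move=> y z /sumsetP [a [_ [Ta /imfsetP [i _ ->] ->]]].
  move=> /sumsetP [b [_ [Tb /imfsetP [j _ ->] ->]]].
  by rewrite addrACA -mulrnDr mem_sumset ?TD.
- move=> y; rewrite inE => /predU1P [->|sy].
    by rewrite -[x]add0r -[X in 0 + X]mulr1n mem_sumset.
  by rewrite -[y]addr0 -(mulr0n x) mem_sumset ?sT.
- move=> _ /sumsetP [t [_ [Tt /imfsetP [j _ ->] ->]]].
  by apply: torsionD; [apply: torT | apply: torsionMn].
Qed.

End Torsion.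

Section Lift.
Variables (G G' : zmodType) (phi : {additive G -> G'}) (s : G' -> G) (T : {fset G}).
Hypothesis sK : cancel s phi.
Hypothesis phiT : {in T, forall t, phi t = 0}.

Definition lift_fset (X' : {fset G'}) : {fset G} := sumset (fimage s X') T.

Lemma card_lift_fset X' : #|` lift_fset X'| = (#|` X'| * #|` T|)%N.
Proof.
rewrite card_sumset_inj /fimage ?card_imfset //; first exact: can_inj sK.
move=> _ t /imfsetP [x _ ->] Tt _ t' /imfsetP [x' _ ->] Tt' E.
have xx' : x = x' by move: (congr1 phi E); rewrite !raddfD !sK !phiT ?addr0.
by rewrite -xx' in E *; split=> //; apply: addrI E.
Qed.

Lemma lift_fsetS X' Y' : fsubset X' Y' -> fsubset (lift_fset X') (lift_fset Y').
Proof.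
by move=> /fsubsetP XY; rewrite sumsetS ?fsubset_refl // subset_imfset.
Qed.

Hypothesis TD : {in T &, forall a b, a + b \in T}.

Lemma sumset_lift_fset X' Y' :
  {in X' & Y', forall x y, s x + s y - s (x + y) \in T} ->
  fsubset (sumset (lift_fset X') (lift_fset Y')) (lift_fset (sumset X' Y')).
Proof.
move=> defectT; apply/fsubsetP => _ /sumsetP [_ [_ [/sumsetP [_ [t [
  /imfsetP [x X'x ->] Tt ->]]] /sumsetP [_ [t' [/imfsetP [y Y'y ->] Tt' ->]]] ->]]].
have -> : s x + t + (s y + t') = s (x + y) + ((s x + s y - s (x + y)) + (t + t')).
  by rewrite [RHS]addrA [s (x + y) + _]addrC subrK addrACA.
apply: mem_sumset; last by apply: TD; [apply: defectT | apply: TD].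
by apply/imfsetP; exists (x + y); rewrite ?mem_sumset.
Qed.

Lemma sub_lift_fset_image (U : {fset G}) :
  {in U, forall u, u - s (phi u) \in T} -> fsubset U (lift_fset (fimage phi U)).
Proof.
move=> defectT; apply/fsubsetP => u Uu.
rewrite -[u](addrNK (s (phi u))) addrC mem_sumset ?defectT //.
by apply/imfsetP; exists (phi u) => //; apply/imfsetP; exists u.
Qed.

End Lift.

Section TorsionQuotient.
Variables (G G' : zmodType) (phi : {additive G -> G'}).
Hypothesis phi_surj : forall y : G', exists x : G, phi x = y.
Hypothesis phi_ker : forall x : G, phi x = 0 <-> torsion x.

Lemma exists_section_torsion_hull (U : {fset G}) (W' : {fset G'}) :
  exists (s : G' -> G) (T : {fset G}), cancel s phi /\
    [/\ 0 \in T, {in T &, forall a b, a + b \in T}, {in T, forall t, phi t = 0},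
      {in W' &, forall x y, s x + s y - s (x + y) \in T} &
      {in U, forall u, u - s (phi u) \in T}].
Proof.
have [s sK] := choice phi_surj.
pose defects := [seq s x + s y - s (x + y) | x <- W', y <- W'] ++
                [seq u - s (phi u) | u <- U].
have [T [T0 TD defectsT torT]] : exists T : {fset G}, [/\ 0 \in T,
    {in T &, forall a b, a + b \in T}, {subset defects <= T} &
    {in T, forall t, torsion t}].
  apply: torsion_hull => d; rewrite mem_cat => /orP [].
    by move=> /allpairsP [[x y] /= [_ _ ->]]; apply/phi_ker; rewrite !raddfB raddfD !sK subrr.
  by move=> /mapP [u _ ->]; apply/phi_ker; rewrite raddfB sK subrr.
exists s, T; split=> //; split=> //.
- by move=> t /torT /phi_ker.
- move=> x y W'x W'y; apply: defectsT; rewrite mem_cat; apply/orP; left.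
  by apply/allpairsP; exists (x, y).
- move=> u Uu; apply: defectsT; rewrite mem_cat; apply/orP; right.
  by apply/mapP; exists u.
Qed.

Lemma exists_torsion_lift (U : {fset G}) (A' B' : {fset G'}) :
  let U' := fimage phi U in
  exists (L : {fset G'} -> {fset G}) (t : nat), (0 < t)%N /\
  [/\ forall X', #|` L X'| = (#|` X'| * t)%N,
    forall X', X' != fset0 -> L X' != fset0,
    forall X', fsubset U' X' -> fsubset U (L X'),
    (#|` sumset (L A') (L B')| <= #|` sumset A' B'| * t)%N &
    (#|` sumset (sumset (L A') (L B')) U| <=
       #|` sumset (sumset A' B') U'| * t)%N].
Proof.
move=> U'; pose W' := A' `|` B' `|` sumset A' B' `|` U'.
have [s [T [sK [T0 TD phiT defectW defectU]]]] := exists_section_torsion_hull U W'.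
have defect X' Y' : fsubset X' W' -> fsubset Y' W' ->
    {in X' & Y', forall x y, s x + s y - s (x + y) \in T}.
  by move=> /fsubsetP XW /fsubsetP YW x y /XW W'x /YW W'y; apply: defectW.
have [AW BW ABW UW] :
    [/\ fsubset A' W', fsubset B' W', fsubset (sumset A' B') W' & fsubset U' W'].
  by split; apply/fsubsetP => x Xx; rewrite !inE Xx ?orbT.
have AB_lift := sumset_lift_fset TD (defect _ _ AW BW).
have T_gt0 : (0 < #|` T|)%N by rewrite cardfs_gt0; apply/fset0Pn; exists 0.
exists (lift_fset s T), #|` T|; split=> //; split.
- exact: card_lift_fset.
- by move=> X'; rewrite -!cardfs_gt0 (card_lift_fset sK phiT) muln_gt0 T_gt0 andbT.
- move=> X' /(lift_fsetS s T).
  exact: fsubset_trans (sub_lift_fset_image defectU).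
- by rewrite -(card_lift_fset sK phiT); apply: fsubset_leq_card.
- rewrite -(card_lift_fset sK phiT); apply: fsubset_leq_card.
  apply: fsubset_trans (sumset_lift_fset TD (defect _ _ ABW UW)).
  exact: sumsetS AB_lift (sub_lift_fset_image defectU).
Qed.

End TorsionQuotient.

Lemma ler_div_scale (R : numFieldType) (x t m m' : R) :
  0 < x -> 0 < t -> m <= m' * t -> m / (x * t) <= m' / x.
Proof.
move=> x_gt0 t_gt0 le_m; rewrite ler_pdivrMr ?mulr_gt0 //.
by rewrite mulrA divfK ?gt_eqF.
Qed.

Lemma ratio_scale_le (R : numFieldType) (a t m m' : nat) :
  (0 < a)%N -> (0 < t)%N -> (m <= m' * t)%N ->
  m%:R / (a * t)%:R <= m'%:R / a%:R :> R.
Proof. by move=> a_gt0 t_gt0 le_m; rewrite natrM ler_div_scale ?ltr0n // -natrM ler_nat. Qed.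

Lemma sqrt_ratio_scale_le (R : rcfType) (a b t m m' : nat) :
  (0 < a)%N -> (0 < b)%N -> (0 < t)%N -> (m <= m' * t)%N ->
  m%:R / Num.sqrt ((a * t)%:R * (b * t)%:R) <= m'%:R / Num.sqrt (a%:R * b%:R) :> R.
Proof.
move=> a_gt0 b_gt0 t_gt0 le_m.
have -> : Num.sqrt ((a * t)%:R * (b * t)%:R) = Num.sqrt (a%:R * b%:R) * t%:R :> R.
  rewrite !natrM mulrACA -expr2 [LHS]sqrtrM ?mulr_ge0 ?ler0n //.
  by rewrite sqrtr_sqr ger0_norm ?ler0n.
by rewrite ler_div_scale ?sqrtr_gt0 ?mulr_gt0 ?ltr0n // -natrM ler_nat.
Qed.

Lemma le_inf_dominated (R : realType) (S S' : set R) :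
  has_lbound S -> (S' !=set0)%classic -> (forall r', S' r' -> exists2 r, S r & r <= r') ->
  inf S <= inf S'.
Proof.
move=> lbS S'0 domS; apply: lb_le_inf => // r' /domS [r Sr le_rr'].
by apply: le_trans le_rr'; apply: ge_inf.
Qed.

Lemma fset1U_neq0 (K : choiceType) (x : K) (A : {fset K}) : x |` A != fset0.
Proof. by apply/fset0Pn; exists x; rewrite fset1U1. Qed.

Section FunctionalsOfImage.
Variables (R : realType) (G G' : zmodType) (phi : {additive G -> G'}).
Hypothesis phi_surj : forall y : G', exists x : G, phi x = y.
Hypothesis phi_ker : forall x : G, phi x = 0 <-> torsion x.
Variable U : {fset G}.
Let U' := fimage phi U.
Let lift_bounds := exists_torsion_lift phi_surj phi_ker U.

Lemma alpha_le_image : alpha R U <= alpha R U'.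
Proof.
apply: le_inf_dominated.
- by exists 0 => _ [A [B [_ _ _ _ ->]]]; rewrite divr_ge0 ?sqrtr_ge0.
- by eexists; exists (0 |` U'), (0 |` U'); split; rewrite ?fset1U_neq0 ?fsubsetUr.
move=> _ [A' [B' [A'0 B'0 UA' UB' ->]]].
have [L [t [t_gt0 [cardL L0 UL AB _]]]] := lift_bounds A' B'.
eexists; first by exists (L A'), (L B'); split=> //; rewrite ?L0 ?UL.
by rewrite !cardL sqrt_ratio_scale_le // cardfs_gt0.
Qed.

Lemma alpha'_le_image : alpha' R U <= alpha' R U'.
Proof.
apply: le_inf_dominated.
- by exists 0 => _ [A [B [_ _ _ _ ->]]]; rewrite divr_ge0.
- by eexists; exists (0 |` U'), (0 |` U'); split; rewrite ?fset1U_neq0 ?fsubsetUr.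
move=> _ [A' [B' [A'0 B'0 [UA' UB'] cardA'B' ->]]].
have [L [t [t_gt0 [cardL L0 UL AB _]]]] := lift_bounds A' B'.
eexists; first by exists (L A'), (L B'); split=> //; rewrite ?L0 ?UL ?cardL ?cardA'B'.
by rewrite cardL ratio_scale_le // cardfs_gt0.
Qed.

Lemma alpha''_le_image : alpha'' R U <= alpha'' R U'.
Proof.
apply: le_inf_dominated.
- by exists 0 => _ [A [_ _ ->]]; rewrite divr_ge0.
- by eexists; exists (0 |` U'); split; rewrite ?fset1U_neq0 ?fsubsetUr.
move=> _ [A' [A'0 UA' ->]].
have [L [t [t_gt0 [cardL L0 UL AA _]]]] := lift_bounds A' A'.
eexists; first by exists (L A'); split=> //; rewrite ?L0 ?UL.
by rewrite cardL ratio_scale_le // cardfs_gt0.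
Qed.

Lemma beta_le_image : beta R U <= beta R U'.
Proof.
apply: le_inf_dominated.
- by exists 0 => _ [A [B [_ _ ->]]]; rewrite divr_ge0 ?sqrtr_ge0.
- by eexists; exists (0 |` U'), (0 |` U'); split; rewrite ?fset1U_neq0.
move=> _ [A' [B' [A'0 B'0 ->]]].
have [L [t [t_gt0 [cardL L0 _ _ ABU]]]] := lift_bounds A' B'.
eexists; first by exists (L A'), (L B'); split=> //; rewrite ?L0.
by rewrite !cardL sqrt_ratio_scale_le // cardfs_gt0.
Qed.

Lemma beta'_le_image : beta' R U <= beta' R U'.
Proof.
apply: le_inf_dominated.
- by exists 0 => _ [A [B [_ _ _ ->]]]; rewrite divr_ge0 ?sqrtr_ge0.
- by eexists; exists (0 |` U'), (0 |` U'); split; rewrite ?fset1U_neq0.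
move=> _ [A' [B' [A'0 B'0 cardA'B' ->]]].
have [L [t [t_gt0 [cardL L0 _ _ ABU]]]] := lift_bounds A' B'.
eexists; first by exists (L A'), (L B'); split=> //; rewrite ?L0 ?cardL ?cardA'B'.
by rewrite !cardL sqrt_ratio_scale_le // cardfs_gt0.
Qed.

Lemma beta''_le_image : beta'' R U <= beta'' R U'.
Proof.
apply: le_inf_dominated.
- by exists 0 => _ [A [_ ->]]; rewrite divr_ge0.
- by eexists; exists (0 |` U'); split; rewrite ?fset1U_neq0.
move=> _ [A' [A'0 ->]].
have [L [t [t_gt0 [cardL L0 _ _ AAU]]]] := lift_bounds A' A'.
eexists; first by exists (L A'); split=> //; rewrite ?L0.
by rewrite cardL ratio_scale_le // cardfs_gt0.
Qed.

End FunctionalsOfImage.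

Theorem mainTheorem18 (R : realType) (G G' : zmodType)
    (phi : {additive G -> G'})
    (phi_surj : forall y : G', exists x : G, phi x = y)
    (phi_ker : forall x : G, phi x = 0 <-> torsion x)
    (U : {fset G}) :
  let U' := fimage phi U in
  [/\ alpha R U <= alpha R U',
      alpha' R U <= alpha' R U' &
      alpha'' R U <= alpha'' R U'] /\
  [/\ beta R U <= beta R U',
      beta' R U <= beta' R U' &
      beta'' R U <= beta'' R U'].
Proof.
split; split.
- exact: alpha_le_image.
- exact: alpha'_le_image.
- exact: alpha''_le_image.
- exact: beta_le_image.
- exact: beta'_le_image.
- exact: beta''_le_image.
Qed.
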